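(* Let $N=\{1,\ldots,n\}$, $\mathcal{X}=\{-1,1\}^n$, and fix $p^\circ\in\Delta(\mathcal{X})$ with $p^\circ(x)>0$ for all $x\in\mathcal{X}$. For a deterministic voting rule $\phi:\mathcal{X}\to\{-1,1\}$: (1) $\phi$ is strictly efficient under $p^\circ$ if and only if it is a weighted majority rule with nonnegative weights such that there are no ties; (2) $\phi$ is efficient under $p^\circ$ if and only if it is a weighted majority rule with positive weights; (3) $\phi$ is weakly efficient under $p^\circ$ if and only if it is a weighted majority rule with nonnegative weights.
   Context: A random voting rule is a map $\bar\phi:\mathcal{X}\to[-1,1]$ (outcome $1$ with probability $(1+\bar\phi(x))/2$, else $-1$); deterministic rules are special cases. Under $p$, individual $i$'s responsiveness to $\bar\phi$ is $(E_p[\bar\phi(x)x_i]+1)/2$. A rule $\psi$ is weakly Pareto-preferred to $\phi$ under $p$ if every individual's responsiveness under $\psi$ is $\geq$ that under $\phi$; Pareto-preferred if additionally strict for at least one individual; strictly Pareto-preferred if strict for all individuals. $\phi$ is strictly efficient under $p$ if no other random rule is weakly Pareto-preferred to it; efficient if no random rule is Pareto-preferred to it; weakly efficient if no random rule is strictly Pareto-preferred to it. A weighted majority rule with nonzero weight vector $w\in\mathbb{R}^n$ satisfies $\phi(x)=1$ if $\sum_iw_ix_i>0$ and $\phi(x)=-1$ if $\sum_iw_ix_i<0$ (ties resolved arbitrarily); it has no ties if $\sum_iw_ix_i\neq0$ for all $x$. *)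

From mathcomp Require Import all_boot all_order all_algebra.
From mathcomp Require Import reals.
Set Implicit Arguments. Unset Strict Implicit. Unset Printing Implicit Defensive.
Import Order.TTheory GRing.Theory Num.Theory.
Local Open Scope ring_scope.

(* Profiles x in X = {-1,1}^n, encoded as boolean vectors: true = +1, false = -1. *)
Definition profile (n : nat) := {ffun 'I_n -> bool}.

Definition pm1 {R : ringType} (b : bool) : R := if b then 1 else -1.

Section Voting.
Variables (R : realType) (n : nat).

Definition full_support_dist (p : profile n -> R) : Prop :=
  (forall x, 0 < p x) /\ \sum_(x : profile n) p x = 1.

Definition random_rule (phi : profile n -> R) : Prop :=
  forall x, -1 <= phi x <= 1.

Definition responsiveness (p : profile n -> R) (phi : profile n -> R) (i : 'I_n) : R :=
  (\sum_(x : profile n) p x * (phi x * pm1 (x i)) + 1) / 2.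

Definition weakly_pareto_pref p (psi phi : profile n -> R) : Prop :=
  forall i, responsiveness p phi i <= responsiveness p psi i.

Definition pareto_pref p (psi phi : profile n -> R) : Prop :=
  weakly_pareto_pref p psi phi /\ exists i, responsiveness p phi i < responsiveness p psi i.

Definition strictly_pareto_pref p (psi phi : profile n -> R) : Prop :=
  forall i, responsiveness p phi i < responsiveness p psi i.

Definition strictly_efficient p (phi : profile n -> R) : Prop :=
  ~ exists psi, random_rule psi /\ psi <> phi /\ weakly_pareto_pref p psi phi.

Definition efficient p (phi : profile n -> R) : Prop :=
  ~ exists psi, random_rule psi /\ pareto_pref p psi phi.

Definition weakly_efficient p (phi : profile n -> R) : Prop :=
  ~ exists psi, random_rule psi /\ strictly_pareto_pref p psi phi.

Definition det_rule (phi : profile n -> bool) : profile n -> R := fun x => pm1 (phi x).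

Definition wsum (w : 'I_n -> R) (x : profile n) : R := \sum_i w i * pm1 (x i).

(* weighted majority rule with nonzero weight vector w (ties arbitrary) *)
Definition weighted_majority (w : 'I_n -> R) (phi : profile n -> bool) : Prop :=
  (exists i, w i != 0) /\
  forall x, (0 < wsum w x -> phi x = true) /\ (wsum w x < 0 -> phi x = false).

Definition no_ties (w : 'I_n -> R) : Prop := forall x, wsum w x != 0.

End Voting.

(* Let corr psi i = E_p[psi(x) x_i], so responsiveness is (1 + corr)/2 and is
   linear in the rule. If phi is a weighted majority rule for w, then phi(x)
   maximizes v * (w . x) over v in [-1, 1] at every profile, so phi maximizes
   sum_i w_i corr_i among all random rules; the sign conditions on w (and the
   absence of ties, which makes the maximizer unique) exclude the corresponding
   kind of Pareto improvement.
   Conversely, the required w is the solution of a finite system of linear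
   inequalities. If it has none, Motzkin's theorem of alternatives, proved by
   Fourier-Motzkin elimination, gives nonnegative multipliers; those d_x of the
   sign constraints define the improvement x |-> phi(x) (1 - eps d_x). *)

From mathcomp Require Import all_boot all_order all_algebra.
From mathcomp Require Import reals.
From mathcomp Require Import ring lra.
From mathcomp Require Import boolp.
Set Implicit Arguments. Unset Strict Implicit. Unset Printing Implicit Defensive.
Import Order.TTheory GRing.Theory Num.Theory.
Local Open Scope ring_scope.

Lemma pm1_neq0 (R : nzRingType) b : pm1 b != 0 :> R.
Proof. by case: b; rewrite /= ?oppr_eq0 oner_eq0. Qed.

Lemma psumr_gt0 (R : numDomainType) (I : finType) (F : I -> R) i0 :
  (forall i, 0 <= F i) -> 0 < F i0 -> 0 < \sum_i F i.
Proof. by move=> F_ge0 Fi0; rewrite (bigD1 i0) //= ltr_pwDl ?sumr_ge0. Qed.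

Section TheoremOfAlternatives.
Variable R : realFieldType.

Definition sat_ineq (strict : bool) (v : R) : bool := if strict then 0 < v else 0 <= v.

Lemma sat_ineq_ge0 s v : sat_ineq s v -> 0 <= v.
Proof. by case: s => //= /ltW. Qed.

Lemma sat_ineq_gt0 s v : 0 < v -> sat_ineq s v.
Proof. by case: s => //= /ltW. Qed.

Lemma sat_ineq_le s v v' : v <= v' -> sat_ineq s v -> sat_ineq s v'.
Proof. by case: s => /= vv' h; [apply: lt_le_trans vv' | apply: le_trans vv']. Qed.

Lemma sat_ineq_orl s s' v : sat_ineq (s || s') v -> sat_ineq s v.
Proof. by case: s; case: s' => //= /ltW. Qed.

Lemma sat_ineq_orr s s' v : sat_ineq (s || s') v -> sat_ineq s' v.
Proof. by case: s; case: s' => //= /ltW. Qed.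

Lemma sat_ineq_pmull s c v : 0 < c -> sat_ineq s (c * v) = sat_ineq s v.
Proof. by case: s => /= c0; [rewrite pmulr_rgt0 | rewrite pmulr_rge0]. Qed.

Lemma sumr_delta (K : finType) (k : K) (F : K -> R) : \sum_l (l == k)%:R * F l = F k.
Proof.
rewrite (bigD1 k) //= eqxx mul1r big1 ?addr0 // => l /negbTE ->.
by rewrite mul0r.
Qed.

Lemma exchange_comb (I J : finType) (mu : I -> R) (rho : I -> J -> R) (G : J -> R) :
  \sum_j (\sum_i mu i * rho i j) * G j = \sum_i mu i * \sum_j rho i j * G j.
Proof.
under eq_bigr do rewrite mulr_suml.
rewrite exchange_big /=; apply: eq_bigr => i _; rewrite mulr_sumr.
by apply: eq_bigr => j _; rewrite mulrA.
Qed.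

Lemma exists_between (K : finType) (P Q : pred K) (lo hi : K -> R) (s : K -> bool) :
    (forall k l, P k -> Q l -> sat_ineq (s k || s l) (hi l - lo k)) ->
  exists t, (forall k, P k -> sat_ineq (s k) (t - lo k)) /\
            (forall l, Q l -> sat_ineq (s l) (hi l - t)).
Proof.
move=> lo_hi.
case: (pickP P) => [k0 Pk0|P0]; case: (pickP Q) => [l0 Ql0|Q0].
- case: (arg_maxP lo Pk0) => kM PkM kM_max; case: (arg_minP hi Ql0) => lm Qlm lm_min.
  have half b v : sat_ineq b v -> sat_ineq b (v / 2).
    by rewrite mulrC sat_ineq_pmull // invr_gt0 ltr0n.
  exists ((lo kM + hi lm) / 2); split=> [k Pk | l Ql].
  + have /sat_ineq_orl/half := lo_hi _ _ Pk Qlm.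
    by apply: sat_ineq_le; have : lo k <= lo kM := kM_max k Pk; lra.
  + have /sat_ineq_orr/half := lo_hi _ _ PkM Ql.
    by apply: sat_ineq_le; have := lm_min l Ql; lra.
- case: (arg_maxP lo Pk0) => kM PkM kM_max.
  exists (lo kM + 1); split=> [k Pk | l]; last by rewrite Q0.
  by apply: sat_ineq_gt0; have : lo k <= lo kM := kM_max k Pk; lra.
- case: (arg_minP hi Ql0) => lm Qlm lm_min.
  exists (hi lm - 1); split=> [k | l Ql]; first by rewrite P0.
  by apply: sat_ineq_gt0; have := lm_min l Ql; lra.
- by exists 0; split=> [k | l]; rewrite ?P0 ?Q0.
Qed.

Lemma exists_sol_one_var (K : finType) (a r : K -> R) (s : K -> bool) :
    (forall k, a k = 0 -> sat_ineq (s k) (r k)) ->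
    (forall k l, 0 < a k -> a l < 0 ->
       sat_ineq (s k || s l) (- a l * r k + a k * r l)) ->
  exists t, forall k, sat_ineq (s k) (a k * t + r k).
Proof.
move=> zero_rows pair_rows; pose root_of k := - r k / a k.
have [|t [t_lo t_hi]] :=
  @exists_between K [pred k | 0 < a k] [pred l | a l < 0] root_of root_of s.
  move=> k l /= ak al; have akl : 0 < a k * - a l by rewrite mulr_gt0 ?oppr_gt0.
  rewrite -(sat_ineq_pmull _ _ akl).
  have -> : a k * - a l * (root_of l - root_of k) = - a l * r k + a k * r l.
    by rewrite /root_of; field; rewrite gt_eqF // lt_eqF.
  exact: pair_rows.
exists t => k; have [ak|ak|ak] := ltrgt0P (a k).
- have := t_lo k ak; rewrite -(sat_ineq_pmull _ _ ak) /root_of.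
  suff -> : a k * (t - - r k / a k) = a k * t + r k by [].
  by field; rewrite gt_eqF.
- have nak : 0 < - a k by rewrite oppr_gt0.
  have := t_hi k ak; rewrite -(sat_ineq_pmull _ _ nak) /root_of.
  suff -> : - a k * (- r k / a k - t) = a k * t + r k by [].
  by field; rewrite lt_eqF.
- by rewrite ak mul0r add0r; apply: zero_rows.
Qed.

Definition feasible n (K : finType) (c : K -> 'I_n -> R) (e : K -> R) (s : K -> bool) :=
  exists y : 'I_n -> R, forall k, sat_ineq (s k) (\sum_i c k i * y i + e k).

Definition certificate n (K : finType) (c : K -> 'I_n -> R) (e : K -> R) (s : K -> bool)
    (mu : K -> R) :=
  [/\ forall k, 0 <= mu k, forall i, \sum_k mu k * c k i = 0 &
      \sum_k mu k * e k < 0 \/ \sum_k mu k * e k = 0 /\ exists k, s k && (0 < mu k)].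

Lemma infeasible_certificate0 (K : finType) (c : K -> 'I_0 -> R) e s :
  ~ feasible c e s -> exists mu, certificate c e s mu.
Proof.
move=> nf; case: (pickP [pred k | ~~ sat_ineq (s k) (e k)]) => [k /= nk|sat_all]; last first.
  by case: nf; exists (fun _ => 0) => k; rewrite big_ord0 add0r; move/negbFE: (sat_all k).
exists (fun l => (l == k)%:R); split=> [l||]; [exact: ler0n | by case |].
rewrite sumr_delta; move: nk; case sk: (s k) => /=; rewrite -?ltNge -?leNgt; last by left.
rewrite le_eqVlt => /orP [/eqP ->|->]; last by left.
by right; split=> //; exists k; rewrite sk eqxx ltr01.
Qed.

(* One Fourier-Motzkin step on the coefficients [a] of the eliminated variable:
   keep the rows where [a] vanishes and combine every row with [a > 0] with every
   row with [a < 0] so that the variable cancels. *)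
Definition fm_comb (K : finType) (a : K -> R) (m : K + K * K) (k : K) : R :=
  match m with
  | inl l => if a l == 0 then (k == l)%:R else 0
  | inr (l, l') =>
      if (0 < a l) && (a l' < 0) then - a l' * (k == l)%:R + a l * (k == l')%:R else 0
  end.

Definition fm_strict (K : finType) (a : K -> R) (s : K -> bool) (m : K + K * K) : bool :=
  match m with
  | inl l => (a l == 0) && s l
  | inr (l, l') => [&& 0 < a l, a l' < 0 & s l || s l']
  end.

Section FourierMotzkinStep.
Variables (K : finType) (a : K -> R).

Lemma fm_comb_ge0 m k : 0 <= fm_comb a m k.
Proof.
case: m => [l|[l l']] /=; first by case: ifP => // _; rewrite ler0n.
case: ifP => // /andP [al al']; apply: addr_ge0; apply: mulr_ge0;
  by rewrite ?ler0n // ?oppr_ge0 ltW.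
Qed.

Lemma sum_fm_comb m (r : K -> R) :
  \sum_k fm_comb a m k * r k =
  match m with
  | inl l => if a l == 0 then r l else 0
  | inr (l, l') => if (0 < a l) && (a l' < 0) then - a l' * r l + a l * r l' else 0
  end.
Proof.
have zero_comb : \sum_(k : K) 0 * r k = 0 by rewrite big1 // => k _; rewrite mul0r.
case: m => [l|[l l']] /=; case: ifP => // _; first exact: sumr_delta.
rewrite (eq_bigr (fun k => - a l' * ((k == l)%:R * r k) + a l * ((k == l')%:R * r k))).
  by rewrite big_split /= -!mulr_sumr !sumr_delta.
by move=> k _; ring.
Qed.

Lemma fm_comb_elim m : \sum_k fm_comb a m k * a k = 0.
Proof.
rewrite sum_fm_comb; case: m => [l|[l l']]; first by case: eqP.
by case: ifP => // _; ring.
Qed.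

Lemma fm_comb_strict s m : fm_strict a s m -> exists k, s k && (0 < fm_comb a m k).
Proof.
case: m => [l|[l l']] /=; first by case/andP => al sl; exists l; rewrite sl al eqxx ltr01.
case/and3P => al al' sll'; rewrite al al' /=.
have /negbTE ll' : l != l' by apply: contraTneq al => ->; rewrite -leNgt ltW.
case/orP: sll' => [sl|sl'].
  by exists l; rewrite sl eqxx ll' mulr1 mulr0 addr0 oppr_gt0.
by exists l'; rewrite sl' eqxx eq_sym ll' mulr1 mulr0 add0r.
Qed.

End FourierMotzkinStep.

Section FourierMotzkin.
Variables (n : nat) (K : finType) (c : K -> 'I_n.+1 -> R) (e : K -> R) (s : K -> bool).

Local Notation a := (c^~ ord0).
Local Notation elim_c := (fun m j => \sum_k fm_comb a m k * c k (lift ord0 j)).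
Local Notation elim_e := (fun m => \sum_k fm_comb a m k * e k).

Lemma fm_elim_infeasible : ~ feasible c e s -> ~ feasible elim_c elim_e (fm_strict a s).
Proof.
move=> nf [y' elim_sol]; pose r k := \sum_j c k (lift ord0 j) * y' j + e k.
have comb_r m : sat_ineq (fm_strict a s m) (\sum_k fm_comb a m k * r k).
  have := elim_sol m; rewrite exchange_comb -big_split /=.
  by under eq_bigr do rewrite -mulrDr.
have [t sol_t] : exists t, forall k, sat_ineq (s k) (a k * t + r k).
  apply: exists_sol_one_var => [k ak|k l ak al].
  - by have := comb_r (inl k); rewrite sum_fm_comb /= ak eqxx.
  - by have := comb_r (inr (k, l)); rewrite sum_fm_comb /= ak al.
apply: nf; exists (fun i => if unlift ord0 i is Some j then y' j else t) => k.
rewrite big_ord_recl unlift_none; under eq_bigr do rewrite liftK.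
by rewrite -addrA; apply: sol_t.
Qed.

Lemma certificate_of_fm_elim mu' :
  certificate elim_c elim_e (fm_strict a s) mu' -> exists mu, certificate c e s mu.
Proof.
case=> mu'_ge0 mu'_c mu'_e; exists (fun k => \sum_m mu' m * fm_comb a m k).
have mu_ge0 k : 0 <= \sum_m mu' m * fm_comb a m k.
  by apply: sumr_ge0 => m _; rewrite mulr_ge0 ?fm_comb_ge0.
split=> [//|i|]; rewrite exchange_comb.
  case: (unliftP ord0 i) => [j ->|->]; first exact: mu'_c.
  by rewrite big1 // => m _; rewrite fm_comb_elim mulr0.
case: mu'_e => [|[-> [m /andP [sm mu'm]]]]; [by left | right; split=> //].
have [k /andP [sk comb_k]] := fm_comb_strict sm; exists k; rewrite sk /=.
by apply: (psumr_gt0 (i0 := m)) => [m'|]; rewrite ?mulr_gt0 ?mulr_ge0 ?fm_comb_ge0.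
Qed.

End FourierMotzkin.

Lemma infeasible_certificate n (K : finType) (c : K -> 'I_n -> R) e s :
  ~ feasible c e s -> exists mu, certificate c e s mu.
Proof.
elim: n K c e s => [|n IH] K c e s nf; first exact: infeasible_certificate0.
have [mu' cert'] := IH _ _ _ _ (fm_elim_infeasible nf).
exact: certificate_of_fm_elim cert'.
Qed.

Lemma feasible_or_certificate n (K : finType) (c : K -> 'I_n -> R) e s :
  feasible c e s \/ exists mu, certificate c e s mu.
Proof. by case: (EM (feasible c e s)) => [|/infeasible_certificate]; [left | right]. Qed.

End TheoremOfAlternatives.

Section WeightedMajority.
Variables (R : realType) (n : nat) (p : profile n -> R) (phi : profile n -> bool).
Hypothesis p_gt0 : forall x, 0 < p x.

Local Notation Phi := (det_rule R phi).

Definition corr (psi : profile n -> R) (i : 'I_n) : R := \sum_x p x * (psi x * pm1 (x i)).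

Lemma responsiveness_le psi psi' i :
  (responsiveness p psi i <= responsiveness p psi' i) = (corr psi i <= corr psi' i).
Proof. by rewrite /responsiveness ler_pM2r ?invr_gt0 ?ltr0n // lerD2r. Qed.

Lemma responsiveness_lt psi psi' i :
  (responsiveness p psi i < responsiveness p psi' i) = (corr psi i < corr psi' i).
Proof. by rewrite /responsiveness ltr_pM2r ?invr_gt0 ?ltr0n // ltrD2r. Qed.

Lemma sum_weighted_corr w psi :
  \sum_i w i * corr psi i = \sum_x p x * (psi x * wsum w x).
Proof.
rewrite /corr /wsum; under eq_bigr do rewrite mulr_sumr.
rewrite exchange_big /=; apply: eq_bigr => x _.
by rewrite !mulr_sumr; apply: eq_bigr => i _; ring.
Qed.

Lemma exists_weight_neq0 (w u : 'I_n -> R) : \sum_i w i * u i != 0 -> exists i, w i != 0.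
Proof.
case: (pickP (fun i => w i != 0)) => [i wi _|w0]; first by exists i.
by rewrite big1 ?eqxx // => i _; move/negbFE/eqP: (w0 i) => ->; rewrite mul0r.
Qed.

Lemma weighted_majority_of_sign w :
  (exists i, w i != 0) -> (forall x, 0 <= Phi x * wsum w x) -> weighted_majority w phi.
Proof.
move=> w_neq0 sign; split=> // x; have := sign x; rewrite /det_rule.
by case: (phi x); rewrite /= ?mul1r ?mulN1r => h; split=> // W; exfalso; lra.
Qed.

Section Majority.
Variable w : 'I_n -> R.
Hypothesis wm : weighted_majority w phi.

Lemma majority_vote_max x (v : R) : -1 <= v <= 1 -> v * wsum w x <= Phi x * wsum w x.
Proof.
case: wm => _ /(_ x) [pos neg] /andP [v_ge v_le]; rewrite /det_rule.
have [W|W|->] := ltrgt0P (wsum w x); last by rewrite !mulr0.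
- by rewrite pos //= mul1r; nra.
- by rewrite neg //= mulN1r; nra.
Qed.

Lemma weighted_corr_le psi :
  random_rule psi -> \sum_i w i * corr psi i <= \sum_i w i * corr Phi i.
Proof.
move=> psi_rule; rewrite !sum_weighted_corr; apply: ler_sum => x _.
by rewrite ler_pM2l // majority_vote_max.
Qed.

Lemma weighted_gain_le0 psi i0 :
    random_rule psi -> (forall i, 0 <= w i * (corr psi i - corr Phi i)) ->
  w i0 * (corr psi i0 - corr Phi i0) <= 0.
Proof.
move=> psi_rule gain_ge0; rewrite leNgt; apply/negP => /(psumr_gt0 gain_ge0).
under eq_bigr do rewrite mulrBr; rewrite sumrB subr_gt0 ltNge.
by rewrite weighted_corr_le.
Qed.

End Majority.

Lemma weighted_majority_weakly_efficient (w : 'I_n -> R) :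
  weighted_majority w phi -> (forall i, 0 <= w i) -> weakly_efficient p Phi.
Proof.
move=> wm w_ge0 [psi [psi_rule better]].
have gain i : 0 < corr psi i - corr Phi i by rewrite subr_gt0 -responsiveness_lt.
have [i0 wi0] := wm.1.
have := weighted_gain_le0 wm i0 psi_rule (fun i => mulr_ge0 (w_ge0 i) (ltW (gain i))).
by rewrite leNgt mulr_gt0 // lt_def wi0 w_ge0.
Qed.

Lemma weighted_majority_efficient (w : 'I_n -> R) :
  weighted_majority w phi -> (forall i, 0 < w i) -> efficient p Phi.
Proof.
move=> wm w_gt0 [psi [psi_rule [weakly [i0 better]]]].
have gain i : 0 <= corr psi i - corr Phi i by rewrite subr_ge0 -responsiveness_le.
have := weighted_gain_le0 wm i0 psi_rule (fun i => mulr_ge0 (ltW (w_gt0 i)) (gain i)).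
by rewrite leNgt mulr_gt0 // subr_gt0 -responsiveness_lt.
Qed.

Lemma weighted_majority_strictly_efficient (w : 'I_n -> R) :
  weighted_majority w phi -> (forall i, 0 <= w i) -> no_ties w -> strictly_efficient p Phi.
Proof.
move=> wm w_ge0 no_tie [psi [psi_rule [psi_neq weakly]]]; apply: psi_neq.
apply: funext => x.
pose gap y := p y * (Phi y * wsum w y) - p y * (psi y * wsum w y).
have gap_ge0 y : 0 <= gap y by rewrite subr_ge0 ler_pM2l // majority_vote_max.
have gap_sum : \sum_y gap y = 0.
  apply/eqP; rewrite eq_le sumr_ge0 // andbT sumrB -!sum_weighted_corr subr_le0.
  by apply: ler_sum => i _; rewrite ler_wpM2l // -responsiveness_le.
have /eqP := psumr_eq0P (fun y _ => gap_ge0 y) gap_sum (i := x) isT.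
rewrite /gap -mulrBr -mulrBl !mulf_eq0 gt_eqF //= (negbTE (no_tie x)) orbF subr_eq0.
by move/eqP ->.
Qed.

(* The linear system in [w] whose solutions are the weight vectors asked for by
   the theorem: rows [inl (inl j)] say [w j >= lb], row [inl (inr 0)] says
   [sum w >= 1] when [normalize] (this excludes [w = 0]), and row [inr x] says that
   [phi x] has the sign of [wsum w x], strictly when [strict]. *)
Definition wm_coef (normalize : bool) (k : 'I_n + 'I_1 + profile n) (i : 'I_n) : R :=
  match k with
  | inl (inl j) => (i == j)%:R
  | inl (inr _) => normalize%:R
  | inr x => p x * Phi x * pm1 (x i)
  end.

Definition wm_const (lb : R) (normalize : bool) (k : 'I_n + 'I_1 + profile n) : R :=
  match k with
  | inl (inl _) => - lb
  | inl (inr _) => - normalize%:R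
  | inr _ => 0
  end.

Definition wm_strict (strict : bool) (k : 'I_n + 'I_1 + profile n) : bool :=
  if k is inr _ then strict else false.

Lemma wm_solution lb normalize strict w :
    (forall k, sat_ineq (wm_strict strict k)
       (\sum_i wm_coef normalize k i * w i + wm_const lb normalize k)) ->
  [/\ forall j, lb <= w j, normalize -> 1 <= \sum_j w j &
      forall x, sat_ineq strict (Phi x * wsum w x)].
Proof.
move=> sol; split=> [j|norm|x].
- by have := sol (inl (inl j)); rewrite /= sumr_delta subr_ge0.
- have := sol (inl (inr ord0)); rewrite /= norm subr_ge0.
  by under eq_bigr do rewrite mul1r.
- rewrite -(sat_ineq_pmull _ _ (p_gt0 x)); have := sol (inr x); rewrite /= addr0.
  suff -> : \sum_i p x * Phi x * pm1 (x i) * w i = p x * (Phi x * wsum w x) by [].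
  by rewrite /wsum !mulr_sumr; apply: eq_bigr => i _; ring.
Qed.

Lemma wm_certificate lb normalize strict mu :
    certificate (wm_coef normalize) (wm_const lb normalize) (wm_strict strict) mu ->
  let nu := normalize%:R * mu (inl (inr ord0)) in
  [/\ forall k, 0 <= mu k,
      forall i, corr (fun x => mu (inr x) * Phi x) i = - (mu (inl (inl i)) + nu) &
      0 < lb * \sum_j mu (inl (inl j)) + nu \/
      lb * \sum_j mu (inl (inl j)) + nu = 0 /\ exists x, strict && (0 < mu (inr x))].
Proof.
case=> mu_ge0 mu_c mu_e nu; split=> // [i|].
- have := mu_c i; rewrite !big_sumType /= big_ord1.
  rewrite (eq_bigr (fun j => (j == i)%:R * mu (inl (inl j)))) ?sumr_delta; last first.
    by move=> j _; rewrite mulrC eq_sym.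
  have -> : corr (fun x => mu (inr x) * Phi x) i =
            \sum_x mu (inr x) * (p x * Phi x * pm1 (x i)).
    by apply: eq_bigr => x _; ring.
  by rewrite /nu mulrC; lra.
- have E : \sum_k mu k * wm_const lb normalize k = - (lb * \sum_j mu (inl (inl j)) + nu).
    rewrite big_sumType /= [X in _ + X]big1 ?addr0 => [|x _]; last exact: mulr0.
    by rewrite big_sumType /= big_ord1 -mulr_suml /nu; ring.
  rewrite E oppr_lt0 in mu_e; case: mu_e => [|[zero [k /andP [sk mk]]]]; first by left.
  right; split; first by apply/eqP; rewrite -oppr_eq0 zero.
  by case: k sk mk => [[]|x] // sx mx; exists x; apply/andP.
Qed.

Definition perturb (d : profile n -> R) (eps : R) (x : profile n) : R :=
  Phi x - eps * (d x * Phi x).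

Lemma corr_perturb d eps i :
  corr (perturb d eps) i = corr Phi i - eps * corr (fun x => d x * Phi x) i.
Proof. by rewrite /corr mulr_sumr -sumrB; apply: eq_bigr => x _; rewrite /perturb; ring. Qed.

Lemma perturb_random_rule (d : profile n -> R) :
  (forall x, 0 <= d x) -> exists2 eps, 0 < eps & random_rule (perturb d eps).
Proof.
move=> d_ge0; have sum_ge0 : 0 <= \sum_x d x by apply: sumr_ge0.
exists (1 + \sum_x d x)^-1; first by rewrite invr_gt0; lra.
move=> x; set t := (1 + \sum_x d x)^-1 * d x.
have t_ge0 : 0 <= t by rewrite mulr_ge0 // invr_ge0; lra.
have t_le1 : t <= 1.
  rewrite /t mulrC ler_pdivrMr; last lra.
  rewrite mul1r (bigD1 x) //=.
  have : 0 <= \sum_(y | y != x) d y by apply: sumr_ge0.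
  lra.
rewrite /perturb mulrA -/t /det_rule; clearbody t.
by case: (phi x) => /=; rewrite ?mulr1 ?mulrN1 ?opprK; apply/andP; split; lra.
Qed.

Lemma perturb_neq (d : profile n -> R) eps x :
  0 < eps -> 0 < d x -> perturb d eps x != Phi x.
Proof.
move=> eps_gt0 dx_gt0; rewrite -subr_eq0 addrAC subrr add0r oppr_eq0 !mulf_eq0.
by rewrite (gt_eqF eps_gt0) (gt_eqF dx_gt0) pm1_neq0.
Qed.

Lemma weakly_efficient_weighted_majority : weakly_efficient p Phi ->
  exists w : 'I_n -> R, weighted_majority w phi /\ (forall i, 0 <= w i).
Proof.
move=> eff.
have [[w /wm_solution [w_ge0 w_sum w_sign]]|[mu /wm_certificate [mu_ge0 mu_corr mu_e]]] :=
  feasible_or_certificate (wm_coef true) (wm_const 0 true) (wm_strict false).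
  exists w; split=> //; apply: weighted_majority_of_sign => [|x]; last first.
    exact: sat_ineq_ge0 (w_sign x).
  apply: (@exists_weight_neq0 _ (fun=> 1)); under eq_bigr do rewrite mulr1.
  by rewrite gt_eqF // (lt_le_trans ltr01 (w_sum isT)).
have nu_gt0 : 0 < mu (inl (inr ord0)).
  by case: mu_e => [|[_ [x //]]]; rewrite mul0r add0r mul1r.
have [eps eps_gt0 psi_rule] := perturb_random_rule (fun x => mu_ge0 (inr x)).
exfalso; apply: eff; exists (perturb (fun x => mu (inr x)) eps); split=> // i.
rewrite responsiveness_lt corr_perturb mu_corr.
by rewrite mulrN opprK ltrDl mulr_gt0 // ltr_wpDl ?mu_ge0 // mul1r.
Qed.

Lemma efficient_weighted_majority : (0 < n)%N -> efficient p Phi ->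
  exists w : 'I_n -> R, weighted_majority w phi /\ (forall i, 0 < w i).
Proof.
move=> n_gt0 eff.
have [[w /wm_solution [w_ge1 _ w_sign]]|[mu /wm_certificate [mu_ge0 mu_corr mu_e]]] :=
  feasible_or_certificate (wm_coef false) (wm_const 1 false) (wm_strict false).
  have w_gt0 i : 0 < w i by apply: lt_le_trans ltr01 (w_ge1 i).
  exists w; split=> //; apply: weighted_majority_of_sign => [|x].
    by exists (Ordinal n_gt0); rewrite gt_eqF.
  exact: sat_ineq_ge0 (w_sign x).
have [i0 /= mu_i0] : exists i, true && (0 < mu (inl (inl i))).
  apply: psumr_neq0P => [i _|]; first exact: mu_ge0.
  by case: mu_e => [|[_ [x //]]]; rewrite mul0r addr0 mul1r => /gt_eqF/eqP.
have [eps eps_gt0 psi_rule] := perturb_random_rule (fun x => mu_ge0 (inr x)).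
have gain i : corr (perturb (fun x => mu (inr x)) eps) i = corr Phi i + eps * mu (inl (inl i)).
  by rewrite corr_perturb mu_corr mul0r addr0 mulrN opprK.
exfalso; apply: eff; exists (perturb (fun x => mu (inr x)) eps).
split=> //; split=> [i|]; first by rewrite responsiveness_le gain lerDl mulr_ge0 // ltW.
by exists i0; rewrite responsiveness_lt gain ltrDl mulr_gt0.
Qed.

Lemma strictly_efficient_weighted_majority : strictly_efficient p Phi ->
  exists w : 'I_n -> R, weighted_majority w phi /\ (forall i, 0 <= w i) /\ no_ties w.
Proof.
move=> eff.
have [[w /wm_solution [w_ge0 _ w_sign]]|[mu /wm_certificate [mu_ge0 mu_corr mu_e]]] :=
  feasible_or_certificate (wm_coef false) (wm_const 0 false) (wm_strict true).
  have no_tie : no_ties w.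
    by move=> x; have := w_sign x; apply: contraTneq => ->; rewrite /= mulr0 ltxx.
  exists w; split=> //; apply: weighted_majority_of_sign => [|x].
    exact: exists_weight_neq0 (no_tie [ffun=> true]).
  exact: sat_ineq_ge0 (w_sign x).
have [x0 mu_x0] : exists x, 0 < mu (inr x).
  by case: mu_e => [|[_ //]]; rewrite mul0r add0r mul0r ltxx.
have [eps eps_gt0 psi_rule] := perturb_random_rule (fun x => mu_ge0 (inr x)).
exfalso; apply: eff; exists (perturb (fun x => mu (inr x)) eps).
split=> //; split=> [/(congr1 (fun f => f x0))/eqP|i].
  by rewrite (negbTE (perturb_neq _ _)).
rewrite responsiveness_le corr_perturb mu_corr.
by rewrite mul0r addr0 mulrN opprK lerDl mulr_ge0 // ltW.
Qed.

End WeightedMajority.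

Theorem propositionB (R : realType) (n : nat) (hn : (0 < n)%N)
    (p : profile n -> R) (hp : full_support_dist p) (phi : profile n -> bool) :
  (strictly_efficient p (det_rule R phi) <->
     exists w : 'I_n -> R, weighted_majority w phi /\ (forall i, 0 <= w i) /\ no_ties w)
  /\
  (efficient p (det_rule R phi) <->
     exists w : 'I_n -> R, weighted_majority w phi /\ (forall i, 0 < w i))
  /\
  (weakly_efficient p (det_rule R phi) <->
     exists w : 'I_n -> R, weighted_majority w phi /\ (forall i, 0 <= w i)).
Proof.
have p_gt0 := hp.1.
split; [|split]; split.
- exact: strictly_efficient_weighted_majority.
- by case=> w [wm [w_ge0 no_tie]]; apply: weighted_majority_strictly_efficient wm w_ge0 no_tie.
- exact: efficient_weighted_majority.
- by case=> w [wm w_gt0]; apply: weighted_majority_efficient wm w_gt0.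
- exact: weakly_efficient_weighted_majority.
- by case=> w [wm w_ge0]; apply: weighted_majority_weakly_efficient wm w_ge0.
Qed.
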